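(* Let $m,n>0$, let $f$ and $g$ be concave positive real functions on $[0,m]$ and $[0,n]$ respectively, and let $A=\{(x,y): 0\le x\le m,\ 0\le y\le f(x)\}$ and $B=\{(x,y): 0\le x\le n,\ 0\le y\le g(x)\}$. If $C=m\left(\frac{|A|}{m^2}-\frac{|B|}{n^2}\right)\ge 0$ and $f(x)=\frac{m}{n}g(\frac{n}{m}x)+C$ for all $x\in[0,m]$, then $$|A+B|=\left(\frac{|A|}{m}+\frac{|B|}{n}\right)(m+n).$$
   Context: $|X|$ denotes area; $A+B$ is the Minkowski sum. *)

From HB Require Import structures.
From mathcomp Require Import all_boot all_order all_algebra.
From mathcomp Require Import all_classical all_reals all_analysis.
Set Implicit Arguments. Unset Strict Implicit. Unset Printing Implicit Defensive.
Import Order.TTheory GRing.Theory Num.Theory.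
Local Open Scope classical_set_scope.
Local Open Scope ring_scope.

Definition concave_on (R : realType) (a b : R) (f : R -> R) : Prop :=
  forall x y t : R, a <= x <= b -> a <= y <= b -> 0 <= t <= 1 ->
    (1 - t) * f x + t * f y <= f ((1 - t) * x + t * y).

Definition subgraph (R : realType) (m : R) (f : R -> R) : set (R * R) :=
  [set p | 0 <= p.1 <= m /\ 0 <= p.2 <= f p.1].

Definition minkowski_sum (R : realType) (A B : set (R * R)) : set (R * R) :=
  [set p | exists a b, A a /\ B b /\ p = (a.1 + b.1, a.2 + b.2)].

Definition area (R : realType) (X : set (R * R)) : \bar R :=
  ((@lebesgue_measure R) \x (@lebesgue_measure R))%E X.

(* With l = m / n, the hypothesis on f says that A is the subgraph over [0, l n]
   of x |-> l g (x / l) + C: a copy of B dilated by l and lifted by C.  For g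
   concave and nonnegative, such dilated subgraphs add under Minkowski sum
   (dilation factors and lifts add), since concavity gives
   k1 g(u) + k2 g(v) <= (k1 + k2) g((k1 u + k2 v) / (k1 + k2)).
   So A + B is B dilated by 1 + l and lifted by C, and by Cavalieri and the
   substitution x |-> x / k every such region has area k^2 |B| + c k n. *)

From HB Require Import structures.
From mathcomp Require Import all_boot all_order all_algebra.
From mathcomp Require Import all_classical all_reals all_analysis.
From mathcomp Require Import ring lra measurable_realfun.
Set Implicit Arguments.
Unset Strict Implicit.
Unset Printing Implicit Defensive.
Import Order.TTheory GRing.Theory Num.Theory.
Local Open Scope classical_set_scope.
Local Open Scope ring_scope.

Section ConcaveSubgraphs.
Variable R : realType.
Local Notation mu := (@lebesgue_measure R).

Lemma lebesgue_measure_itv0c (b : R) : 0 <= b -> mu `[0, b] = b%:E.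
Proof.
rewrite le_eqVlt => /orP[/eqP <-|b0]; last by rewrite lebesgue_measure_itv /= lte_fin b0 sube0.
by rewrite set_itv1 lebesgue_measure_set1.
Qed.

Lemma concave_ge_between (n : R) (g : R -> R) (a x y z : R) :
  concave_on 0 n g -> 0 <= x -> x <= z <= y -> y <= n ->
  a <= g x -> a <= g y -> a <= g z.
Proof.
move=> cg x0 /andP[xz zy] yn gx gy.
have [exy|nxy] := eqVneq x y.
  by have -> : z = x by apply/le_anti; rewrite xz exy zy.
have yx0 : 0 < y - x by rewrite subr_gt0 lt_neqAle nxy (le_trans xz zy).
pose t := (z - x) / (y - x).
have t0 : 0 <= t by rewrite divr_ge0; lra.
have t1 : t <= 1 by rewrite ler_pdivrMr // mul1r; lra.
have zE : z = (1 - t) * x + t * y by rewrite /t; field; rewrite gt_eqF.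
have := cg x y t; rewrite -zE => concave_xy.
apply: le_trans (concave_xy _ _ _); try (apply/andP; lra).
have : 0 <= (1 - t) * (g x - a) by rewrite mulr_ge0 // subr_ge0.
have : 0 <= t * (g y - a) by rewrite mulr_ge0 // subr_ge0.
lra.
Qed.

Lemma concave_measurable_fun (n : R) (g : R -> R) :
  concave_on 0 n g -> measurable_fun `[0, n] g.
Proof.
move=> cg mD; apply: (measurability _ (RGenCInfty.measurableE R)) => //.
move=> _ [_ [a ->] <-]; apply: is_interval_measurable.
move=> x y [xD gx] [yD gy] z /andP[xz zy].
move: xD yD gx gy; rewrite /preimage /= !in_itv /= !andbT => /andP[x0 _] /andP[_ yn] gx gy.
split; first by apply/andP; split; lra.
by apply: (concave_ge_between cg x0 _ yn gx gy); apply/andP.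
Qed.

Lemma concave_ge0_le_mid (n : R) (g : R -> R) (x : R) :
  concave_on 0 n g -> (forall y, 0 <= y <= n -> 0 <= g y) ->
  0 <= x <= n -> g x <= 2 * g (n / 2).
Proof.
move=> cg g0 /andP[x0 xn].
have := cg x (n - x) (1 / 2); rewrite (_ : _ * x + _ = n / 2); last by field.
have := g0 (n - x); lra.
Qed.

Lemma concave_integral_fin_num (n : R) (g : R -> R) : 0 <= n ->
  concave_on 0 n g -> (forall x, 0 <= x <= n -> 0 <= g x) ->
  (\int[mu]_(x in `[0%R, n]) (g x)%:E)%E \is a fin_num.
Proof.
move=> n0 cg g0.
have Eg_ge0 (x : R) : x \in `[0, n] -> (0 <= (g x)%:E)%E by rewrite in_itv lee_fin => /g0.
rewrite ge0_fin_numE; last exact: integral_ge0.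
apply: (@le_lt_trans _ _ (\int[mu]_(x in `[0%R, n]) (cst (2 * g (n / 2))%:E) x)%E).
  apply: ge0_le_integral => //.
  - by apply/measurable_EFinP; exact: concave_measurable_fun cg.
  - by move=> x; rewrite /= in_itv /= lee_fin => xn; exact: concave_ge0_le_mid.
rewrite integral_cst // [X in (_ * X)%E](_ : _ = n%:E) ?ltry //.
exact: lebesgue_measure_itv0c.
Qed.

Lemma lebesgue_measure_pushforward_divr (k : R) (A : set R) : 0 < k ->
  measurable A -> pushforward mu (fun x : R => x / k) A = (k%:E * mu A)%E.
Proof.
move=> k0 mA.
pose phi := (fun x : R => x / k) : R -> measurableTypeR R.
have mphi : measurable_fun [set: R] phi by exact: mulrr_measurable.
have kV0 : 0 <= k^-1 by rewrite invr_ge0 ltW.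
pose kV : {nonneg R} := NngNum kV0.
pose nu := mscale kV
  (measure_function_pushforward__canonical__measure_function_Measure mu mphi).
have -> : mu A = nu A.
  apply: lebesgue_measure_unique mA => _ [[a b] _ <-].
  rewrite /= /mscale /=; unfold pushforward.
  have -> : phi @^-1` `]a, b]%classic = `]a * k, b * k]%classic.
    by apply/seteqP; split => x; rewrite /phi /= !in_itv /= ler_pdivrMr // ltr_pdivlMr.
  rewrite !lebesgue_measure_itv /= !lte_fin ltr_pM2r //.
  case: ifPn => ab; last by rewrite mule0.
  by rewrite -!EFinB -EFinM; congr EFin; field; rewrite gt_eqF.
by rewrite /nu /mscale /= muleA -EFinM mulfV ?mul1e // gt_eqF.
Qed.

Lemma ge0_integral_comp_divr (k n : R) (g : R -> R) : 0 < k ->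
  (forall x, 0 <= x <= n -> 0 <= g x) -> measurable_fun `[0, n] g ->
  (\int[mu]_(x in `[0%R, (k * n)%R]) (g (x / k))%:E =
   k%:E * \int[mu]_(x in `[0%R, n]) (g x)%:E)%E.
Proof.
move=> k0 g0 mg.
pose phi := (fun x : R => x / k) : measurableTypeR R -> measurableTypeR R.
have mphi : measurable_fun [set: R] phi by exact: mulrr_measurable.
have -> : `[0, k * n]%classic = phi @^-1` `[0, n]%classic.
  apply/seteqP; split => x; rewrite /phi /= !in_itv /= pmulr_lge0 ?invr_gt0 //;
  by rewrite ler_pdivrMr // mulrC.
have := @ge0_integral_pushforward _ _ _ _ R phi mphi mu `[0, n] (fun y => (g y)%:E).
move=> <- //; last 2 first.
- exact/measurable_EFinP.
- by move=> y; rewrite inE /= in_itv /= lee_fin => /g0.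
rewrite (@eq_measure_integral _ _ _ _ (mscale (NngNum (ltW k0)) mu)); last first.
  by move=> A mA _; exact: lebesgue_measure_pushforward_divr.
by rewrite ge0_integral_mscale //; exact/measurable_EFinP.
Qed.

Lemma area_subgraphE (L : R) (h : R -> R) :
  (forall x, 0 <= x <= L -> 0 <= h x) ->
  area (subgraph L h) = (\int[mu]_(x in `[0%R, L]) (h x)%:E)%E.
Proof.
move=> h0; rewrite /area /product_measure1 [RHS]integral_mkcond.
apply: eq_integral => x _ /=; rewrite /patch; case: ifPn => [|xL].
  rewrite inE /= in_itv /= => xL.
  rewrite (_ : xsection _ _ = `[0, h x]%classic); last first.
    apply/seteqP; split => y; rewrite /xsection /= inE /subgraph /= in_itv /=.
      by case=> _ /andP[-> ->].
    by move=> /andP[-> ->]; split.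
  exact/lebesgue_measure_itv0c/h0.
rewrite (_ : xsection _ _ = set0) ?measure0 //.
apply/seteqP; split => y //; rewrite /xsection /= inE /subgraph /= => -[xL' _].
by move: xL; rewrite notin_setE /= in_itv /= xL'.
Qed.

Lemma eq_subgraph (L : R) (h1 h2 : R -> R) :
  (forall x, 0 <= x <= L -> h1 x = h2 x) -> subgraph L h1 = subgraph L h2.
Proof.
move=> e; apply/seteqP; split => -[x y] /= [xL yh]; split => //.
  by rewrite -e.
by rewrite e.
Qed.

Lemma divr_itv0c (k n x : R) : 0 < k -> 0 <= x <= k * n -> 0 <= x / k <= n.
Proof.
move=> k0 /andP[x0 xn]; apply/andP; split; first by rewrite divr_ge0 // ltW.
by rewrite ler_pdivrMr // mulrC.
Qed.

Definition dilated_subgraph (n : R) (g : R -> R) (k c : R) : set (R * R) :=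
  subgraph (k * n) (fun x => k * g (x / k) + c).

Lemma area_dilated_subgraph (n : R) (g : R -> R) (k c : R) :
  0 <= n -> (forall x, 0 <= x <= n -> 0 <= g x) -> measurable_fun `[0, n] g ->
  0 < k -> 0 <= c ->
  area (dilated_subgraph n g k c) =
  ((k ^+ 2)%:E * \int[mu]_(x in `[0%R, n]) (g x)%:E + (c * (k * n))%:E)%E.
Proof.
move=> n0 g0 mg k0 c0.
have divk_itv x : 0 <= x <= k * n -> 0 <= x / k <= n := divr_itv0c k0.
have kg0 x : 0 <= x <= k * n -> 0 <= k * g (x / k).
  by move=> /divk_itv /g0; apply: mulr_ge0; exact: ltW.
have mgk : measurable_fun `[0, k * n] (fun x => g (x / k)).
  apply: (measurable_comp (F := `[0, n])) => //.
  - by move=> _ [x /= xD <-]; apply: divk_itv; rewrite in_itv in xD.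
  - exact: mulrr_measurable.
rewrite area_subgraphE => [|x /kg0 ?]; last exact: addr_ge0.
under eq_integral do rewrite EFinD EFinM.
rewrite ge0_integralD //; last first.
  by apply: emeasurable_funM => //; exact/measurable_EFinP.
rewrite ge0_integralZl //; last 3 first.
- exact/measurable_EFinP.
- by move=> x /= /[1!in_itv] /divk_itv /g0; rewrite lee_fin.
- by rewrite lee_fin ltW.
rewrite ge0_integral_comp_divr // integral_cst //.
rewrite [X in (c%:E * X)%E](_ : _ = (k * n)%:E).
  by rewrite muleA -!EFinM expr2.
by apply: lebesgue_measure_itv0c; rewrite mulr_ge0 // ltW.
Qed.

Lemma concave_weighted_mean (n : R) (g : R -> R) (k1 k2 u v : R) :
  concave_on 0 n g -> 0 < k1 -> 0 < k2 -> 0 <= u <= n -> 0 <= v <= n ->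
  k1 * g u + k2 * g v <= (k1 + k2) * g ((k1 * u + k2 * v) / (k1 + k2)).
Proof.
move=> cg k10 k20 u_itv v_itv; have k0 : 0 < k1 + k2 by rewrite addr_gt0.
have t_itv : 0 <= k2 / (k1 + k2) <= 1.
  apply/andP; split; first by apply: divr_ge0; lra.
  by rewrite ler_pdivrMr // mul1r; lra.
have k0' : k1 + k2 != 0 by rewrite gt_eqF.
have := cg u v _ u_itv v_itv t_itv.
have -> : (1 - k2 / (k1 + k2)) * u + k2 / (k1 + k2) * v =
          (k1 * u + k2 * v) / (k1 + k2) by field.
have -> : k1 * g u + k2 * g v =
          (k1 + k2) * ((1 - k2 / (k1 + k2)) * g u + k2 / (k1 + k2) * g v) by field.
by rewrite ler_pM2l.
Qed.

Lemma minkowski_dilated_subgraph (n : R) (g : R -> R) (k1 k2 c1 c2 : R) :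
  concave_on 0 n g -> (forall x, 0 <= x <= n -> 0 <= g x) ->
  0 < k1 -> 0 < k2 -> 0 <= c1 -> 0 <= c2 ->
  minkowski_sum (dilated_subgraph n g k1 c1) (dilated_subgraph n g k2 c2) =
  dilated_subgraph n g (k1 + k2) (c1 + c2).
Proof.
move=> cg g0 k10 k20 c10 c20; have k0 : 0 < k1 + k2 by rewrite addr_gt0.
apply/seteqP; split.
- move=> _ [[a1 a2] [[b1 b2] [[a1_itv /andP[a20 a2g]] [[b1_itv /andP[b20 b2g]] ->]]]].
  have := concave_weighted_mean cg k10 k20 (divr_itv0c k10 a1_itv) (divr_itv0c k20 b1_itv).
  rewrite [k1 * (_ / _)]mulrC [k2 * (_ / _)]mulrC !divfK ?gt_eqF //.
  move: a1_itv b1_itv a20 b20 a2g b2g => /= /andP[a10 a1n] /andP[b10 b1n] a20 b20 a2g b2g.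
  by rewrite /dilated_subgraph /subgraph /= => concave_ab; split; apply/andP; split; lra.
- move=> [x y] [/= x_itv /andP[y0 yg]].
  pose s := x / (k1 + k2); have s_itv : 0 <= s <= n := divr_itv0c k0 x_itv.
  have gs0 := g0 s s_itv.
  have ks_itv k : 0 < k -> 0 <= k * s <= k * n.
    by move=> k_gt0; rewrite pmulr_rge0 ?ler_pM2l //; case/andP: s_itv.
  have ksK k : 0 < k -> k * s / k = s by move=> k_gt0; rewrite mulrC mulKf ?gt_eqF.
  have xE : x = k1 * s + k2 * s by rewrite -mulrDl /s mulrC divfK ?gt_eqF.
  have gks_ge0 k c : 0 < k -> 0 <= c -> 0 <= k * g s + c.
    by move=> k_gt0 c0; rewrite addr_ge0 // mulr_ge0 // ltW.
  move: yg; rewrite -/s mulrDl => yg.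
  have [y_le|y_gt] := leP y (k1 * g s + c1).
  + exists (k1 * s, y), (k2 * s, 0).
    by rewrite /dilated_subgraph /subgraph /= !ksK // -xE addr0 !ks_itv // y0 y_le lexx gks_ge0.
  + exists (k1 * s, k1 * g s + c1), (k2 * s, y - (k1 * g s + c1)).
    rewrite /dilated_subgraph /subgraph /= !ksK // -xE subrKC !ks_itv // lexx gks_ge0 //.
    by do !split => //; apply/andP; split; lra.
Qed.
End ConcaveSubgraphs.

Theorem lemma4p4 (R : realType) (m n : R) (f g : R -> R) :
  0 < m -> 0 < n ->
  concave_on 0 m f -> concave_on 0 n g ->
  (forall x, 0 <= x <= m -> 0 < f x) ->
  (forall x, 0 <= x <= n -> 0 < g x) ->
  let A := subgraph m f in
  let B := subgraph n g in
  let C := m * (fine (area A) / m ^+ 2 - fine (area B) / n ^+ 2) in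
  0 <= C ->
  (forall x, 0 <= x <= m -> f x = m / n * g (n / m * x) + C) ->
  area (minkowski_sum A B) =
    ((fine (area A) / m + fine (area B) / n) * (m + n))%:E.
Proof.
move=> m0 n0 _ cg _ gpos A B C C0 fE.
have g0 x : 0 <= x <= n -> 0 <= g x by move/gpos/ltW.
have mn0 : 0 < m / n by rewrite divr_gt0.
have mg := concave_measurable_fun cg.
have A_dil : A = dilated_subgraph n g (m / n) C.
  rewrite /A /dilated_subgraph mulfVK ?gt_eqF //; apply: eq_subgraph => x xm.
  by rewrite fE //; congr (_ * g _ + _); field; rewrite !gt_eqF.
have B_dil : B = dilated_subgraph n g 1 0.
  by rewrite /B /dilated_subgraph mul1r; apply: eq_subgraph => x _; rewrite mul1r divr1 addr0.
have [I IE] : exists I, (\int[lebesgue_measure]_(x in `[0%R, n]) (g x)%:E)%E = I%:E.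
  by exists (fine (\int[lebesgue_measure]_(x in `[0%R, n]) (g x)%:E)%E);
    rewrite fineK // concave_integral_fin_num // ltW.
have area_dil k c : 0 < k -> 0 <= c ->
    area (dilated_subgraph n g k c) = (k ^+ 2 * I + c * (k * n))%:E.
  by move=> k0 c0; rewrite area_dilated_subgraph ?IE ?(ltW n0) // -EFinM -EFinD.
rewrite {1}A_dil B_dil minkowski_dilated_subgraph // addr0 A_dil !area_dil ?addr_gt0 //=.
by congr EFin; field; rewrite !gt_eqF.
Qed.
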